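(* If $d_Y\colon Y\times Y\to\mathcal{V}$ is a $\mathcal{V}$-category (i.e. $k\sqsubseteq d_Y(y,y)$ and $d_Y(y_1,y_2)\otimes d_Y(y_2,y_3)\sqsubseteq d_Y(y_1,y_3)$ for all $y,y_1,y_2,y_3\in Y$), then for every function $f\colon X\to Y$, \[\{q\circ f\mid q\in\gamma_Y(d_Y)\}\;=\;\gamma_X(d_Y\circ(f\times f)),\] i.e. $\gamma$ is natural when restricted to $\mathcal{V}$-categories.
   Context: $\mathcal{V}$ is a quantale: a complete lattice $(\mathcal{V},\sqsubseteq)$ with a commutative monoid structure $(\mathcal{V},\otimes,k)$ such that $\otimes$ preserves arbitrary joins in each argument; $d_\mathcal{V}(a,-)$ denotes the right adjoint of $a\otimes -$ (residuation). Write $\bigwedge$ for meets in the order $\sqsubseteq$. For a set $X$ and $S\subseteq\mathcal{V}^X$, $\alpha_X(S)(x_1,x_2)=\bigwedge_{p\in S} d_\mathcal{V}(p(x_1),p(x_2))$; for $d_X\colon X\times X\to\mathcal{V}$, $\gamma_X(d_X)=\{p\colon X\to\mathcal{V}\mid d_X(x_1,x_2)\sqsubseteq d_\mathcal{V}(p(x_1),p(x_2))\text{ for all }x_1,x_2\}$. *)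

(* A quantale is given as an explicit record:
   a complete lattice (partial order with arbitrary joins) together with a
   commutative monoid (tensor, k) whose tensor preserves arbitrary joins
   in each argument (by commutativity, preservation in the second argument
   suffices). *)

Record quantale := Quantale {
  qcar :> Type;
  qle : qcar -> qcar -> Prop;
  qle_refl : forall a, qle a a;
  qle_trans : forall a b c, qle a b -> qle b c -> qle a c;
  qle_antisym : forall a b, qle a b -> qle b a -> a = b;
  qsup : (qcar -> Prop) -> qcar;
  qsup_ub : forall (S : qcar -> Prop) a, S a -> qle a (qsup S);
  qsup_least : forall (S : qcar -> Prop) b,
      (forall a, S a -> qle a b) -> qle (qsup S) b;
  qtensor : qcar -> qcar -> qcar;
  qunit : qcar;
  qtensor_assoc : forall a b c, qtensor a (qtensor b c) = qtensor (qtensor a b) c;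
  qtensor_comm : forall a b, qtensor a b = qtensor b a;
  qtensor_unit : forall a, qtensor qunit a = a;
  qtensor_sup : forall a (S : qcar -> Prop),
      qtensor a (qsup S) = qsup (fun c => exists b, S b /\ c = qtensor a b)
}.

Arguments qle {_}.
Arguments qsup {_}.
Arguments qtensor {_}.
Arguments qunit {_}.

Definition qinf {V : quantale} (S : V -> Prop) : V :=
  qsup (fun c => forall a, S a -> qle c a).

Definition dV {V : quantale} (a b : V) : V :=
  qsup (fun c => qle (qtensor a c) b).

Definition alphaV {V : quantale} {X : Type} (S : (X -> V) -> Prop) (x1 x2 : X) : V :=
  qinf (fun c => exists p, S p /\ c = dV (p x1) (p x2)).

Definition gammaV {V : quantale} {X : Type} (dX : X -> X -> V) : (X -> V) -> Prop :=
  fun p => forall x1 x2, qle (dX x1 x2) (dV (p x1) (p x2)).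

Definition is_Vcategory {V : quantale} {Y : Type} (dY : Y -> Y -> V) : Prop :=
  (forall y, qle qunit (dY y y)) /\
  (forall y1 y2 y3, qle (qtensor (dY y1 y2) (dY y2 y3)) (dY y1 y3)).

(* Given p in gamma_X(d_Y o (f x f)), extend it along f by the left Kan
   extension q y = \/_x p(x) (x) d_Y(f x, y).  Transitivity of d_Y makes q an
   element of gamma_Y(d_Y); reflexivity gives p <= q o f, and p in gamma_X gives
   q o f <= p.  The other inclusion is immediate from the definitions. *)

From Stdlib Require Import FunctionalExtensionality PropExtensionality.

Section QuantaleFacts.
Context {V : quantale}.

Lemma qtensor_mono_r (a b c : V) : qle a b -> qle (qtensor c a) (qtensor c b).
Proof.
  intros Hab.
  (* b is the join of {a, b}, and the tensor preserves that join. *)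
  assert (Hjoin : qsup (fun x => x = a \/ x = b) = b).
  { apply qle_antisym.
    - apply qsup_least. intros x [-> | ->]; [exact Hab | apply qle_refl].
    - apply qsup_ub. now right. }
  rewrite <- Hjoin, qtensor_sup. apply qsup_ub. exists a. split; [now left | reflexivity].
Qed.

Lemma qtensor_unit_r (a : V) : qtensor a qunit = a.
Proof. now rewrite qtensor_comm, qtensor_unit. Qed.

Lemma le_dV (a b c : V) : qle c (dV a b) <-> qle (qtensor a c) b.
Proof.
  split; intros H.
  - eapply qle_trans; [apply qtensor_mono_r, H |].
    unfold dV. rewrite qtensor_sup. apply qsup_least.
    intros x [y [Hy ->]]. exact Hy.
  - now apply qsup_ub.
Qed.

Lemma gammaV_tensorP (X : Type) (d : X -> X -> V) (p : X -> V) :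
  gammaV d p <-> forall x1 x2, qle (qtensor (p x1) (d x1 x2)) (p x2).
Proof.
  unfold gammaV. split; intros H x1 x2; apply le_dV, H.
Qed.

End QuantaleFacts.

Section KanExtension.
Variables (V : quantale) (X Y : Type) (dY : Y -> Y -> V) (f : X -> Y).

Definition lan (p : X -> V) (y : Y) : V :=
  qsup (fun c => exists x, c = qtensor (p x) (dY (f x) y)).

Lemma gammaV_comp (q : Y -> V) :
  gammaV dY q -> gammaV (fun x1 x2 => dY (f x1) (f x2)) (fun x => q (f x)).
Proof. intros Hq x1 x2. apply Hq. Qed.

Lemma gammaV_lan (p : X -> V) :
  (forall y1 y2 y3, qle (qtensor (dY y1 y2) (dY y2 y3)) (dY y1 y3)) ->
  gammaV dY (lan p).
Proof.
  intros Htrans. apply gammaV_tensorP. intros y1 y2.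
  unfold lan. rewrite qtensor_comm, qtensor_sup. apply qsup_least.
  intros c [b [[x ->] ->]].
  eapply qle_trans; [| apply qsup_ub; now exists x].
  rewrite qtensor_comm, <- qtensor_assoc. apply qtensor_mono_r, Htrans.
Qed.

Lemma lan_comp (p : X -> V) :
  (forall y, qle qunit (dY y y)) ->
  gammaV (fun x1 x2 => dY (f x1) (f x2)) p ->
  (fun x => lan p (f x)) = p.
Proof.
  intros Hrefl Hp. apply functional_extensionality. intros x.
  apply qle_antisym.
  - unfold lan. apply qsup_least. intros c [x' ->].
    apply le_dV, Hp.
  - eapply qle_trans; [| apply qsup_ub; now exists x].
    rewrite <- (qtensor_unit_r (p x)) at 1. apply qtensor_mono_r, Hrefl.
Qed.

End KanExtension.

Arguments lan {V X Y} dY f p y.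

Theorem mainTheorem5 (V : quantale) (X Y : Type) (dY : Y -> Y -> V)
  (HdY : is_Vcategory dY) (f : X -> Y) :
  (fun p : X -> V => exists q : Y -> V, gammaV dY q /\ p = (fun x => q (f x)))
  = gammaV (fun x1 x2 : X => dY (f x1) (f x2)).
Proof.
  destruct HdY as [Hrefl Htrans].
  apply functional_extensionality. intros p.
  apply propositional_extensionality. split.
  - intros [q [Hq ->]]. now apply gammaV_comp.
  - intros Hp. exists (lan dY f p). split.
    + now apply gammaV_lan.
    + symmetry. now apply lan_comp.
Qed.
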